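(* Let $b\in\mathbb{R}$ and let $\mathbf{y}(t),\mathbf{x}(t),\mathbf{z}(t)$ be differentiable curves in $\mathbb{R}^3$; set $\mathbf{b}=(0,0,b)^T$. For $\xi=(\xi^1,\xi^2,\xi^3)^T\in\mathbb{R}^3$ let $\hat\xi=\sum_{\alpha=1}^3\xi^\alpha\sigma^\alpha$, where $\sigma^1=\tfrac12\begin{pmatrix}0&\mathrm{i}\\ \mathrm{i}&0\end{pmatrix}$, $\sigma^2=\tfrac12\begin{pmatrix}0&1\\-1&0\end{pmatrix}$, $\sigma^3=\tfrac12\begin{pmatrix}\mathrm{i}&0\\0&-\mathrm{i}\end{pmatrix}$, and put $\mathcal{B}=\hat{\mathbf b}$, $\mathcal{Y}=\hat{\mathbf y}$, $\mathcal{X}=\hat{\mathbf x}$, $\mathcal{Z}=\hat{\mathbf z}$, $$\mathcal{L}(\lambda)=\mathcal{B}+\frac{\mathcal{Y}}{\lambda}+\frac{\mathcal{X}}{\lambda^2}+\frac{\mathcal{Z}}{\lambda^3},\qquad \mathcal{M}(\lambda)=\frac{\mathcal{X}}{\lambda}+\frac{\mathcal{Z}}{\lambda^2}.$$ Then the system $$\dot{\mathbf y}=\mathbf b\wedge\mathbf x,\qquad \dot{\mathbf x}=\mathbf y\wedge\mathbf x+\mathbf b\wedge\mathbf z,\qquad \dot{\mathbf z}=\mathbf y\wedge\mathbf z$$ holds if and only if $\frac{d}{dt}\mathcal{L}(\lambda)=[\mathcal{M}(\lambda),\mathcal{L}(\lambda)]$ for all $\lambda\in\mathbb{C}\setmi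nus\{0\}$.
   Context: $\wedge$ is the vector (cross) product on $\mathbb{R}^3$ and $[\cdot,\cdot]$ the matrix commutator. (This system is the Hamiltonian flow of $\tfrac12\langle\mathbf y,\mathbf y\rangle+\langle\mathbf b,\mathbf x\rangle$ for the Lie–Poisson brackets $\{y^\alpha,y^\beta\}=\epsilon^{\alpha\beta\gamma}y^\gamma$, $\{y^\alpha,x^\beta\}=\epsilon^{\alpha\beta\gamma}x^\gamma$, $\{y^\alpha,z^\beta\}=\epsilon^{\alpha\beta\gamma}z^\gamma$, $\{x^\alpha,x^\beta\}=\epsilon^{\alpha\beta\gamma}z^\gamma$, all other brackets zero.) *)

From HB Require Import structures.
From mathcomp Require Import all_boot all_order all_algebra.
From mathcomp Require Import all_classical all_reals.
From mathcomp Require Import topology normedtype derive.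
From mathcomp Require Import complex.
Set Implicit Arguments. Unset Strict Implicit. Unset Printing Implicit Defensive.
Import Order.TTheory GRing.Theory Num.Theory.
Import numFieldNormedType.Exports.
Local Open Scope ring_scope.
Local Open Scope complex_scope.

Section Defs.
Variable R : realType.

Definition comp3 (u : 'rV[R]_3) (k : nat) : R := u 0 (inord k).

Definition vec3 (a1 a2 a3 : R) : 'rV[R]_3 :=
  \row_(k < 3) (match val k with 0 => a1 | 1 => a2 | _ => a3 end).

Definition cross (u v : 'rV[R]_3) : 'rV[R]_3 :=
  vec3 (comp3 u 1 * comp3 v 2 - comp3 u 2 * comp3 v 1)
       (comp3 u 2 * comp3 v 0 - comp3 u 0 * comp3 v 2)
       (comp3 u 0 * comp3 v 1 - comp3 u 1 * comp3 v 0).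

(* the matrices sigma^1, sigma^2, sigma^3 (index alpha = 0,1,2) *)
Definition sigma (alpha : 'I_3) : 'M[R[i]]_2 :=
  \matrix_(r < 2, c < 2)
   ((2^-1)%:C *
    match val alpha, val r, val c with
    | 0, 0, 1 => 'i  | 0, 1, 0 => 'i
    | 1, 0, 1 => 1   | 1, 1, 0 => -1
    | 2, 0, 0 => 'i  | 2, 1, 1 => - 'i
    | _, _, _ => 0
    end).

Definition hat (xi : 'rV[R]_3) : 'M[R[i]]_2 :=
  \sum_(alpha < 3) (xi 0 alpha)%:C *: sigma alpha.

Definition commutator (A B : 'M[R[i]]_2) : 'M[R[i]]_2 := A *m B - B *m A.

Definition mxderiv (F : R -> 'M[R[i]]_2) (t : R) : 'M[R[i]]_2 :=
  \matrix_(r < 2, c < 2)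
    Complex (@derive1 R R^o (fun s : R => complex.Re (F s r c)) t)
            (@derive1 R R^o (fun s : R => complex.Im (F s r c)) t).

Definition bvec (b : R) : 'rV[R]_3 := vec3 0 0 b.

Definition Lmat (b : R) (y x z : R -> 'rV[R]_3) (lam : R[i]) (t : R) : 'M[R[i]]_2 :=
  hat (bvec b) + lam^-1 *: hat (y t) + (lam ^+ 2)^-1 *: hat (x t)
  + (lam ^+ 3)^-1 *: hat (z t).

Definition Mmat (x z : R -> 'rV[R]_3) (lam : R[i]) (t : R) : 'M[R[i]]_2 :=
  lam^-1 *: hat (x t) + (lam ^+ 2)^-1 *: hat (z t).

End Defs.

From HB Require Import structures.
From mathcomp Require Import all_boot all_order all_algebra.
From mathcomp Require Import all_classical all_reals.
From mathcomp Require Import topology normedtype derive.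
From mathcomp Require Import complex.
From mathcomp Require Import ring lra.
Import Order.TTheory GRing.Theory Num.Theory.
Import numFieldNormedType.Exports.
Local Open Scope ring_scope.

(* The hat map is an injective additive map from R^3 to the complex 2x2
   matrices which turns the cross product into a commutator:
   [hat u, hat v] = hat (v /\ u).  Expanding [M, L] in mu = 1/lambda, the
   mu^4 and mu^5 terms cancel, and dL/dt - [M, L] becomes
   mu hat e1 + mu^2 hat e2 + mu^3 hat e3, where e1, e2, e3 are the defects
   of the three equations of the system.  It vanishes when the system holds;
   conversely, evaluating at mu = 1, -1, 2 and solving the Vandermonde system
   gives e1 = e2 = e3 = 0. *)

Local Notation Re := complex.Re.
Local Notation Im := complex.Im.

Section Cubic.
Variable F : realFieldType.

Lemma cubic_coefs_eq0 m n (A1 A2 A3 : 'M[F]_(m, n)) :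
  (forall c : F, c \in [:: 1; -1; 2] -> c *: A1 + c ^+ 2 *: A2 + c ^+ 3 *: A3 = 0) ->
  [/\ A1 = 0, A2 = 0 & A3 = 0].
Proof.
move=> P0.
have entry c i j : c \in [:: 1; -1; 2] ->
    c * A1 i j + c ^+ 2 * A2 i j + c ^+ 3 * A3 i j = 0.
  by move=> /P0 /matrixP /(_ i j); rewrite !mxE.
have E i j : [/\ A1 i j = 0, A2 i j = 0 & A3 i j = 0].
  have := entry 1 i j; have := entry (-1) i j; have := entry 2 i j.
  rewrite !inE !eqxx !orbT /= => /(_ isT) e2 /(_ isT) e_1 /(_ isT) e1.
  by split; nra.
by split; apply/matrixP => i j; rewrite mxE; case: (E i j).
Qed.

End Cubic.

Section Hat.
Set Implicit Arguments.
Local Open Scope complex_scope.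
Variable R : realType.
Implicit Types u v : 'rV[R]_3.

Lemma comp3_vec3 (a1 a2 a3 : R) :
  [/\ comp3 (vec3 a1 a2 a3) 0 = a1, comp3 (vec3 a1 a2 a3) 1 = a2
    & comp3 (vec3 a1 a2 a3) 2 = a3].
Proof. by rewrite /comp3 !mxE /= !inordK. Qed.

Lemma row3E u : u = vec3 (comp3 u 0) (comp3 u 1) (comp3 u 2).
Proof.
apply/rowP => k; rewrite !mxE /comp3.
by case: k => [[|[|[|//]]] hk]; congr (u 0 _); apply: val_inj; rewrite /= inordK.
Qed.

Lemma row3_ind (P : 'rV[R]_3 -> Prop) :
  (forall a1 a2 a3, P (vec3 a1 a2 a3)) -> forall u, P u.
Proof. by move=> Pvec3 u; rewrite [u]row3E. Qed.

Lemma cross_vec3 (a1 a2 a3 b1 b2 b3 : R) :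
  cross (vec3 a1 a2 a3) (vec3 b1 b2 b3) =
  vec3 (a2 * b3 - a3 * b2) (a3 * b1 - a1 * b3) (a1 * b2 - a2 * b1).
Proof.
by rewrite /cross; case: (comp3_vec3 a1 a2 a3) => -> -> ->;
  case: (comp3_vec3 b1 b2 b3) => -> -> ->.
Qed.

Lemma Complex_realE (x y : R) : x +i* y = x%:C + y%:C * 'i.
Proof. by rewrite [LHS]complexE /= mulrC. Qed.

Lemma hat_vec3 (a1 a2 a3 : R) :
  [/\ hat (vec3 a1 a2 a3) ord0 ord0 = 0 +i* (a3 / 2),
      hat (vec3 a1 a2 a3) ord0 ord_max = (a2 / 2) +i* (a1 / 2),
      hat (vec3 a1 a2 a3) ord_max ord0 = (- (a2 / 2)) +i* (a1 / 2)
    & hat (vec3 a1 a2 a3) ord_max ord_max = 0 +i* (- (a3 / 2))].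
Proof.
by split; rewrite /hat summxE !big_ord_recl big_ord0 !mxE /= !Complex_realE; field.
Qed.

Lemma hat_is_zmod_morphism : zmod_morphism (@hat R).
Proof.
move=> u v; rewrite /hat -sumrB; apply: eq_bigr => k _.
by rewrite !mxE rmorphB scalerBl.
Qed.

HB.instance Definition _ :=
  GRing.isZmodMorphism.Build _ _ (@hat R) hat_is_zmod_morphism.

Lemma hatZ (a : R) u : hat (a *: u) = a%:C *: hat u.
Proof.
rewrite /hat scaler_sumr; apply: eq_bigr => k _.
by rewrite mxE rmorphM scalerA.
Qed.

Lemma hat_inj : injective (@hat R).
Proof.
elim/row3_ind => a1 a2 a3; elim/row3_ind => b1 b2 b3 /matrixP hab.
have [a00 a01 _ _] := hat_vec3 a1 a2 a3; have [b00 b01 _ _] := hat_vec3 b1 b2 b3.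
have := hab ord0 ord0; have := hab ord0 ord_max; rewrite a00 a01 b00 b01.
by case=> e2 e1 [e3]; congr vec3; lra.
Qed.

Lemma mulmx2E (A B : 'M[R[i]]_2) r c :
  (A *m B) r c = A r ord0 * B ord0 c + A r ord_max * B ord_max c.
Proof.
rewrite mxE big_ord_recl big_ord1.
by have -> : lift ord0 ord0 = ord_max :> 'I_2 by apply: val_inj.
Qed.

Lemma ord2_cases (r : 'I_2) : r = ord0 \/ r = ord_max.
Proof. by case: r => [[|[|//]] ?]; [left|right]; apply: val_inj. Qed.

Lemma commutator_hat u v : commutator (hat u) (hat v) = hat (cross v u).
Proof.
elim/row3_ind: u => a1 a2 a3; elim/row3_ind: v => b1 b2 b3.
rewrite cross_vec3.
have [a00 a01 a10 a11] := hat_vec3 a1 a2 a3.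
have [b00 b01 b10 b11] := hat_vec3 b1 b2 b3.
have [c00 c01 c10 c11] :=
  hat_vec3 (b2 * a3 - b3 * a2) (b3 * a1 - b1 * a3) (b1 * a2 - b2 * a1).
have sqr_i : ('i : R[i]) ^+ 2 = -1 by exact: sqr_i.
apply/matrixP => r c; rewrite /commutator mxE [X in _ + X]mxE !mulmx2E.
by case: (ord2_cases r) => ->; case: (ord2_cases c) => ->;
  rewrite ?(a00, a01, a10, a11, b00, b01, b10, b11, c00, c01, c10, c11)
    !Complex_realE; field: sqr_i.
Qed.

End Hat.

Section MatrixCurves.
Set Implicit Arguments.
Local Open Scope complex_scope.
Variable R : realType.

Lemma is_derive_coord_comb n (w : R -> 'rV[R]_n) (a : 'I_n -> R) t :
  derivable w t 1 ->
  is_derive t 1 (fun s => \sum_k a k * w s 0 k : R^o) (\sum_k a k * derive1 w t 0 k).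
Proof.
move=> dw.
have coord k : is_derive t 1 (fun s => w s 0 k : R^o) (derive1 w t 0 k).
  rewrite derive1E derive_mx // mxE; apply: derivableP.
  by move/derivable_mxP: dw; apply.
have -> : (fun s => \sum_k a k * w s 0 k : R^o) =
          \sum_k a k \*: (fun s => w s 0 k : R^o).
  by apply/funext => s; rewrite fct_sumE; apply: eq_bigr.
by apply: is_derive_sum => k; apply: is_deriveZ.
Qed.

(* Testing the entries against every real-linear functional, rather than just
   against Re and Im, lets each rule below be proved once. *)
Definition is_mxderive (F : R -> 'M[R[i]]_2) (t : R) (D : 'M[R[i]]_2) :=
  forall (f : {scalar Rcomplex R}) r c,
    is_derive t 1 (fun s => f (F s r c) : R^o) (f (D r c)).

Lemma is_mxderive_val F t D : is_mxderive F t D -> mxderiv F t = D.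
Proof.
move=> dF; apply/matrixP => r c; rewrite mxE !derive1E.
rewrite (derive_val (is_derive := dF _ r c)) (derive_val (is_derive := dF _ r c)).
by case: (D r c).
Qed.

Lemma is_mxderive_cst C t : is_mxderive (fun=> C) t 0.
Proof. by move=> f r c; rewrite mxE raddf0; apply: is_derive_cst. Qed.

Lemma is_mxderiveD F G D E t :
  is_mxderive F t D -> is_mxderive G t E ->
  is_mxderive (fun s => F s + G s) t (D + E).
Proof.
move=> dF dG f r c.
have -> : (fun s => f ((F s + G s) r c) : R^o) =
          (fun s => f (F s r c) : R^o) + (fun s => f (G s r c)).
  by apply/funext => s; rewrite mxE raddfD.
by rewrite mxE raddfD; apply: is_deriveD.
Qed.

Lemma mul_realC_scale (a : R) (z : R[i]) : a%:C * z = a *: (z : Rcomplex R).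
Proof. by case: z => x y; congr Complex => /=; ring. Qed.

Lemma scalar_scale_hatE (f : {scalar Rcomplex R}) p u r c :
  f ((p *: hat u) r c) = \sum_k f (p * sigma R k r c) * u 0 k.
Proof.
rewrite mxE /hat summxE mulr_sumr linear_sum; apply: eq_bigr => k _.
by rewrite mxE mulrCA mul_realC_scale linearZ /= mulrC.
Qed.

Lemma is_mxderive_scale_hat p (w : R -> 'rV[R]_3) t :
  derivable w t 1 -> is_mxderive (fun s => p *: hat (w s)) t (p *: hat (derive1 w t)).
Proof.
move=> dw f r c; rewrite scalar_scale_hatE.
under eq_fun do rewrite scalar_scale_hatE.
exact: is_derive_coord_comb.
Qed.

Lemma mxderiv_Lmat b (y x z : R -> 'rV[R]_3) lam t :
  derivable y t 1 -> derivable x t 1 -> derivable z t 1 ->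
  mxderiv (Lmat b y x z lam) t =
  lam^-1 *: hat (derive1 y t) + (lam ^+ 2)^-1 *: hat (derive1 x t)
  + (lam ^+ 3)^-1 *: hat (derive1 z t).
Proof.
move=> dy dx dz; rewrite -(add0r (lam^-1 *: _)); apply: is_mxderive_val.
exact (is_mxderiveD (is_mxderiveD (is_mxderiveD (is_mxderive_cst _ t)
  (is_mxderive_scale_hat _ dy)) (is_mxderive_scale_hat _ dx))
  (is_mxderive_scale_hat _ dz)).
Qed.

End MatrixCurves.

Section LaxPair.
Set Implicit Arguments.
Local Open Scope complex_scope.
Variable R : realType.

Lemma commutator_Lax (B Y X Z : 'M[R[i]]_2) (m : R[i]) :
  commutator (m *: X + m ^+ 2 *: Z) (B + m *: Y + m ^+ 2 *: X + m ^+ 3 *: Z) =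
  m *: commutator X B + m ^+ 2 *: (commutator X Y + commutator Z B)
  + m ^+ 3 *: commutator Z Y.
Proof.
apply/matrixP => r c; rewrite /commutator !mxE !big_ord_recl !big_ord0 !mxE.
ring.
Qed.

Lemma Lax_defect b (y x z : R -> 'rV[R]_3) lam t :
  derivable y t 1 -> derivable x t 1 -> derivable z t 1 ->
  mxderiv (Lmat b y x z lam) t - commutator (Mmat x z lam t) (Lmat b y x z lam t) =
  lam^-1 *: hat (derive1 y t - cross (bvec b) (x t))
  + lam^-1 ^+ 2 *: hat (derive1 x t - (cross (y t) (x t) + cross (bvec b) (z t)))
  + lam^-1 ^+ 3 *: hat (derive1 z t - cross (y t) (z t)).
Proof.
move=> dy dx dz.
rewrite mxderiv_Lmat // /Mmat /Lmat -!exprVn commutator_Lax !commutator_hat.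
by rewrite !raddfB !raddfD /= addrACA [X in X + _ = _]addrACA.
Qed.

End LaxPair.

Theorem proposition4 (R : realType) (b : R) (y x z : R -> 'rV[R]_3)
  (hy : forall t : R, derivable y t 1)
  (hx : forall t : R, derivable x t 1)
  (hz : forall t : R, derivable z t 1) :
  ((forall t : R, derive1 y t = cross (bvec b) (x t)) /\
   (forall t : R, derive1 x t = cross (y t) (x t) + cross (bvec b) (z t)) /\
   (forall t : R, derive1 z t = cross (y t) (z t)))
  <->
  (forall lam : R[i], lam != 0 -> forall t : R,
     mxderiv (Lmat b y x z lam) t = commutator (Mmat x z lam t) (Lmat b y x z lam t)).
Proof.
split=> [[dy [dx dz]] lam _ t | lax].
  apply/eqP; rewrite -subr_eq0 Lax_defect // dy dx dz !subrr raddf0.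
  by rewrite !scaler0 !addr0.
suff defects0 t : [/\ derive1 y t - cross (bvec b) (x t) = 0,
    derive1 x t - (cross (y t) (x t) + cross (bvec b) (z t)) = 0
  & derive1 z t - cross (y t) (z t) = 0].
  by split; [|split] => t; have [/subr0_eq ? /subr0_eq ? /subr0_eq ?] := defects0 t.
apply: cubic_coefs_eq0 => m m_in; apply: hat_inj.
have m_neq0 : m != 0.
  apply: contraTneq m_in => ->.
  by rewrite !inE eq_sym oner_eq0 eq_sym oppr_eq0 oner_eq0 eq_sym pnatr_eq0.
have lam_neq0 : (m^-1)%:C%C != 0 :> R[i] by rewrite fmorph_eq0 invr_eq0.
have := Lax_defect b ((m^-1)%:C%C) (hy t) (hx t) (hz t).
rewrite lax // subrr fmorphV invrK => defect0.
rewrite -!rmorphXn -!hatZ -!raddfD in defect0.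
by rewrite raddf0 [RHS]defect0.
Qed.
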